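(* Let $N\ge4$, $M\ge1$, $\mathcal I_N=\{(i,j):i,j\in\{1,\dots,N\},i\ne j\}$, and for each $(i,j)\in\mathcal I_N$ let $Y_{ij}\in\{0,\dots,M\}$ and $X_{ij}\in\mathbb R^k$. Suppose that, conditional on $\mathbf X=(X_{ij})$ and fixed effects $\mathbf F=(F_i)_{i=1}^N$ with $F_i=((\gamma_i,\lambda_{im}):m=1,\dots,M)$, the $Y_{ij}$ are independent across dyads with \[ P(Y_{ij}=m\mid X_{ij},F_i,F_j)=\begin{cases}1-\Lambda(X_{ij}'\beta_0+\gamma_j-\lambda_{i1}), & m=0,\\ \Lambda(X_{ij}'\beta_0+\gamma_j-\lambda_{im})-\Lambda(X_{ij}'\beta_0+\gamma_j-\lambda_{i,m+1}), & 1\le m\le M-1,\\ \Lambda(X_{ij}'\beta_0+\gamma_j-\lambda_{iM}), & m=M,\end{cases} \] where $\Lambda(z)=e^z/(1+e^z)$, $\beta_0\in\mathbb R^k$, and $\lambda_{i1}\le\dots\le\lambda_{iM}$ for each $i$. Let $D_{ij}(m)=\mathbf 1\{Y_{ij}\ge m\}$. For a tetrad $\sigma=(i_1,i_2,j_1,j_2)$ of four distinct nodes and $(m,m')\in\{1,\dots,M\}^2$ define \[ Z_\sigma(m;m')=\tfrac12\Big((D_{i_1j_1}(m)-D_{i_1j_2}(m))-(D_{i_2j_1}(m')-D_{i_2j_2}(m'))\Big), \] $X_\sigma=(X_{i_1j_1},X_{i_1j_2},X_{i_2j_1},X_{i_2j_2})$ and $r_\sigma=(X_{i_1j_1}-X_{i_1j_2})-(X_{i_2j_1}-X_{i_2j_2})$.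 Then for any $(m,m')\in\{1,\dots,M\}^2$, \[ P\big(Z_\sigma(m;m')=1\mid Z_\sigma(m;m')\in\{-1,+1\},X_\sigma\big)=\Lambda(r_\sigma'\beta_0). \]
   Context: $\lambda_{im}$ are category-specific sender threshold effects and $\gamma_j$ is a receiver fixed effect constant across categories. *)

From HB Require Import structures.
From mathcomp Require Import all_boot all_order all_algebra.
From mathcomp Require Import all_classical all_reals all_analysis.
Set Implicit Arguments. Unset Strict Implicit. Unset Printing Implicit Defensive.
Import Order.TTheory GRing.Theory Num.Theory.
Local Open Scope ring_scope.
Local Open Scope classical_set_scope.

Section Defs.
Variable R : realType.

Definition logistic (z : R) : R := expR z / (1 + expR z).

Definition inner (k : nat) (u v : 'rV[R]_k) : R := \sum_(l < k) u 0 l * v 0 l.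

Definition eta (N k : nat) (X : 'I_N -> 'I_N -> 'rV[R]_k) (beta0 : 'rV[R]_k)
  (gamma : 'I_N -> R) (i j : 'I_N) : R := inner (X i j) beta0 + gamma j.

(* ordered-logit probability P(Y_ij = y | X_ij, F_i, F_j); thresholds
   lambda i m are used for m = 1..M *)
Definition ologit_pmf (N M k : nat) (X : 'I_N -> 'I_N -> 'rV[R]_k)
  (beta0 : 'rV[R]_k) (gamma : 'I_N -> R) (lambda : 'I_N -> nat -> R)
  (i j : 'I_N) (y : 'I_M.+1) : R :=
  let e := eta X beta0 gamma i j in
  if (y == 0 :> nat) then 1 - logistic (e - lambda i 1%N)
  else if (y == M :> nat) then logistic (e - lambda i M)
  else logistic (e - lambda i y) - logistic (e - lambda i y.+1).

Definition Dind (M : nat) (y : 'I_M.+1) (m : nat) : R := ((m <= y)%N)%:R.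

Definition condprob d (T : measurableType d) (P : probability T R)
  (A B : set T) : R := fine (P (A `&` B)) / fine (P B).

End Defs.

From Pilot Require Import Defs.
From HB Require Import structures.
From mathcomp Require Import all_boot all_order all_algebra.
From mathcomp Require Import all_classical all_reals all_analysis.
From mathcomp Require Import lra ring.
Import Order.TTheory GRing.Theory Num.Theory.
Local Open Scope ring_scope.
Local Open Scope classical_set_scope.

(* Conditioning on Z in {-1, 1} compares the two configurations
   (D11, D12, D21, D22) = (1, 0, 0, 1) and (0, 1, 1, 0) of the tetrad. By
   independence across dyads each has probability a product of four ordered
   logit tail probabilities L(eta_ij - lambda_im) or 1 - L(eta_ij - lambda_im)
   = L(lambda_im - eta_ij). Since L(-z) = L(z) exp(-z), the second product is
   the first times exp(-(a - b - c + e)), where a, b, c, e are the four indices;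
   in a - b - c + e the receiver effects and the thresholds cancel, leaving
   r' beta0, so the conditional probability p / (p + q) is L(r' beta0). *)

Section Logistic.
Variable R : realType.
Implicit Types a b c e z p q : R.

Lemma logistic_gt0 z : 0 < logistic z.
Proof. by rewrite /logistic divr_gt0 ?addr_gt0 ?expR_gt0. Qed.

Lemma logisticN z : logistic (- z) = 1 - logistic z.
Proof.
have ez := expR_gt0 z; rewrite /logistic expRN.
by field; rewrite ?lt0r_neq0 ?addr_gt0 //; lra.
Qed.

Lemma logisticN_expR z : logistic (- z) = logistic z * expR (- z).
Proof.
have ez := expR_gt0 z; rewrite /logistic expRN.
by field; rewrite ?lt0r_neq0 ?addr_gt0 //; lra.
Qed.

Lemma logistic_expR z : logistic z = logistic (- z) * expR z.
Proof. by rewrite logisticN_expR -mulrA -expRD addNr expR0 mulr1. Qed.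

Lemma logistic_odds p q z : 0 < p -> q = p * expR (- z) -> p / (p + q) = logistic z.
Proof.
move=> p_gt0 ->; have ez := expR_gt0 z; rewrite /logistic expRN.
by field; rewrite ?lt0r_neq0 ?addr_gt0 ?mulr_gt0 ?invr_gt0 //; lra.
Qed.

Lemma logistic_tetrad a b c e :
  let p := logistic a * logistic (- b) * logistic (- c) * logistic e in
  p / (p + logistic (- a) * logistic b * logistic c * logistic (- e))
  = logistic (a - b - c + e).
Proof.
move=> p; apply: logistic_odds.
  by rewrite /p; do ![apply: logistic_gt0 | apply: mulr_gt0].
rewrite /p (logisticN_expR a) (logisticN_expR e) (logistic_expR b) (logistic_expR c).
by rewrite !opprD !opprK !expRD; ring.
Qed.

End Logistic.

Definition ologit_surv {R : realType} (M : nat) (e : R) (l : nat -> R) (y : nat) : R :=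
  if y == 0%N then 1 else if (y <= M)%N then logistic (e - l y) else 0.

Section OrderedLogit.
Variables (R : realType) (N M k : nat) (X : 'I_N -> 'I_N -> 'rV[R]_k).
Variables (beta0 : 'rV[R]_k) (gamma : 'I_N -> R) (lambda : 'I_N -> nat -> R).
Variables (i j : 'I_N).
Hypothesis M_gt0 : (0 < M)%N.

Local Notation pmf := (ologit_pmf X beta0 gamma lambda i j).
Local Notation surv := (ologit_surv M (Defs.eta X beta0 gamma i j) (lambda i)).

Lemma ologit_survE m :
  (1 <= m <= M)%N -> surv m = logistic (Defs.eta X beta0 gamma i j - lambda i m).
Proof. by case/andP=> m_gt0 lemM; rewrite /ologit_surv lemM eqn0Ngt m_gt0. Qed.

Lemma ologit_pmfE (y : 'I_M.+1) : pmf y = surv y - surv y.+1.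
Proof.
case: y => -[|y] /= lt_yM; rewrite /ologit_pmf /ologit_surv /=.
  by rewrite M_gt0.
rewrite ltnS in lt_yM; rewrite lt_yM.
case: eqP => [eq_yM | /eqP neq_yM]; first by rewrite eq_yM ltnn subr0.
by rewrite ltn_neqAle neq_yM lt_yM.
Qed.

Lemma sum_ologit_pmf_ge m : (m <= M.+1)%N ->
  \sum_(y : 'I_M.+1 | (m <= y)%N) pmf y = surv m.
Proof.
move=> le_mM; under eq_bigr do rewrite ologit_pmfE -opprB.
transitivity (\sum_(m <= y < M.+1) - (surv y.+1 - surv y)).
  by rewrite big_geq_mkord.
rewrite sumrN telescope_sumr // opprB.
by rewrite [surv M.+1]/ologit_surv ltnn subr0.
Qed.

Lemma sum_ologit_pmf : \sum_(y : 'I_M.+1) pmf y = 1.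
Proof. by rewrite -[1](@sum_ologit_pmf_ge 0 (leq0n M.+1)). Qed.

Lemma sum_ologit_pmf_lt m : (m <= M.+1)%N ->
  \sum_(y : 'I_M.+1 | (y < m)%N) pmf y = 1 - surv m.
Proof.
move=> le_mM; rewrite -sum_ologit_pmf [in RHS](bigID (fun y : 'I_M.+1 => (m <= y)%N)) /=.
by rewrite sum_ologit_pmf_ge // addrC addrK; apply: eq_bigl => y; rewrite ltnNge.
Qed.

End OrderedLogit.

Lemma big_sig_cond (R : Type) (idx : R) (op : Monoid.com_law idx) (I : finType)
    (D : pred I) (F : I -> R) :
  \big[op/idx]_(i | D i) F i = \big[op/idx]_(j : {i | D i}) F (val j).
Proof.
rewrite (reindex_omap (val : {i | D i} -> I) insub) => [|i Di]; last by rewrite insubT.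
by apply: eq_bigl => j; rewrite valP valK eqxx.
Qed.

Section FiniteAdditivity.
Variables (d : measure_display) (T : measurableType d) (R : realType).
Variable mu : {measure set T -> \bar R}.

Lemma measure_fin_bigcup_pred (I : finType) (D : pred I) (F : I -> set T) :
    (forall i, D i -> measurable (F i)) -> trivIset [set` D] F ->
  mu (\bigcup_(i in [set` D]) F i) = (\sum_(i | D i) mu (F i))%E.
Proof.
move=> Fm Ftriv; rewrite measure_fin_bigcup ?finite_finpred //.
rewrite -(@bigfs _ _ _ _ (enum I)) ?enum_uniq //; last by move=> i _; rewrite mem_enum.
by rewrite big_enum_cond.
Qed.

End FiniteAdditivity.

Section IndependentCoordinates.
Variables (d : measure_display) (T : measurableType d) (R : realType).
Variable P : probability T R.
Variables (I J : finType) (V : I -> T -> J) (f : I -> J -> R).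
Hypothesis V_measurable : forall i y, measurable [set w | V i w = y].
Hypothesis P_atom : forall c : {ffun I -> J},
  P [set w | forall i, V i w = c i] = (\prod_i f i (c i))%:E.

Lemma measurable_rect (A : I -> pred J) :
  measurable [set w | forall i, A i (V i w)].
Proof.
have -> : [set w | forall i, A i (V i w)] =
    \bigcap_(i in [set: I]) \bigcup_(y in [set` A i]) [set w | V i w = y].
  apply/seteqP; split => w Aw i; first by move=> _; exists (V i w) => //; apply: Aw.
  by have [y Ay ->] := Aw i Logic.I.
apply: fin_bigcap_measurable => // i _.
exact: fin_bigcup_measurable.
Qed.

Lemma prob_rect (A : I -> pred J) :
  P [set w | forall i, A i (V i w)] = (\prod_i \sum_(y | A i y) f i y)%:E.
Proof.
have -> : [set w | forall i, A i (V i w)] =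
    \bigcup_(c in [set` family A]) [set w | forall i, V i w = c i].
  apply/seteqP; split => [w Aw|w [c /familyP Ac Vc] i]; last by rewrite Vc; apply: Ac.
  exists [ffun i => V i w]; last by move=> i; rewrite ffunE.
  by apply/familyP => i; rewrite ffunE; apply: Aw.
rewrite (@measure_fin_bigcup_pred _ _ _ P); first last.
- by move=> c c' _ _ [w [Vc Vc']]; apply/ffunP => i; rewrite -Vc -Vc'.
- move=> c _; have -> : [set w | forall i, V i w = c i] = [set w | forall i, V i w == c i].
    by apply/seteqP; split => w Vc i; apply/eqP.
  exact: (measurable_rect (fun i => pred1 (c i))).
rewrite bigA_distr_big_dep -sumEFin; apply: eq_bigr => c _.
exact: P_atom.
Qed.

End IndependentCoordinates.

Lemma big_supp_seq (R : Type) (idx : R) (op : Monoid.com_law idx) (I : finType)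
    (D : pred I) (F : I -> R) (s : seq I) :
    uniq s -> {subset s <= D} -> (forall i, D i -> i \notin s -> F i = idx) ->
  \big[op/idx]_(i | D i) F i = \big[op/idx]_(i <- s) F i.
Proof.
move=> s_uniq sD F1; rewrite (bigID (mem s)) /= [X in op _ X]big1 ?Monoid.mulm1.
  rewrite big_uniq //; apply: eq_bigl => i; rewrite andbC.
  by case: (boolP (i \in s)) => // /sD.
by move=> i /andP[Di /negP ns]; apply: F1 => //; apply/negP.
Qed.
Arguments big_supp_seq {R idx op I D F} s.

Lemma innerB (R : realType) (k : nat) (u v b : 'rV[R]_k) :
  inner (u - v) b = inner u b - inner v b.
Proof. by rewrite /inner -sumrB; apply: eq_bigr => l _; rewrite !mxE mulrBl. Qed.

Lemma condprob_setU d (T : measurableType d) (R : realType) (P : probability T R)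
    (A B : set T) :
    measurable A -> measurable B -> A `&` B = set0 ->
  condprob P A (A `|` B) = fine (P A) / (fine (P A) + fine (P B)).
Proof.
move=> mA mB AB0; rewrite /condprob setIC setUK measureU //.
by rewrite fineD // fin_num_measure.
Qed.

Section HalfDifference.
Variables (R : realFieldType) (b1 b2 b3 b4 : bool).
Let z : R := 2^-1 * ((b1%:R - b2%:R) - (b3%:R - b4%:R)).

Lemma half_diff_eq1 : z = 1 <-> [&& b1, ~~ b2, ~~ b3 & b4].
Proof. by rewrite /z; case: b1 b2 b3 b4 => [] [] [] [] /=; split => //; lra. Qed.

Lemma half_diff_eqN1 : z = -1 <-> [&& ~~ b1, b2, b3 & ~~ b4].
Proof. by rewrite /z; case: b1 b2 b3 b4 => [] [] [] [] /=; split => //; lra. Qed.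

End HalfDifference.

Section DyadicOrderedLogit.
Context {R : realType} {N M k : nat} {X : 'I_N -> 'I_N -> 'rV[R]_k}.
Context {beta0 : 'rV[R]_k} {gamma : 'I_N -> R} {lambda : 'I_N -> nat -> R}.
Context {d : measure_display} {Omega : measurableType d} {P : probability Omega R}.
Context {Y : 'I_N -> 'I_N -> Omega -> 'I_M.+1}.
Hypothesis Y_measurable : forall (i j : 'I_N) (y : 'I_M.+1), i != j ->
  measurable [set w | Y i j w = y].
Hypothesis P_configuration : forall y : 'I_N -> 'I_N -> 'I_M.+1,
  P [set w | forall i j : 'I_N, i != j -> Y i j w = y i j] =
  (\prod_(i < N) \prod_(j < N | i != j) ologit_pmf X beta0 gamma lambda i j (y i j))%:E.

Local Notation pmf i j := (ologit_pmf X beta0 gamma lambda i j).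
Local Notation dyad := {p : 'I_N * 'I_N | p.1 != p.2}.
Local Notation Yd q := (Y (val q).1 (val q).2).

Lemma dyad_rectE (A : 'I_N * 'I_N -> 'I_M.+1 -> Prop) :
  [set w | forall i j, i != j -> A (i, j) (Y i j w)] =
  [set w | forall q : dyad, A (val q) (Yd q w)].
Proof.
apply/seteqP; split => w Aw; first by case=> -[i j] /= /Aw.
by move=> i j ij; apply: (Aw (exist _ (i, j) ij)).
Qed.

Lemma prob_dyad_atom (c : {ffun dyad -> 'I_M.+1}) :
  P [set w | forall q : dyad, Yd q w = c q] =
  (\prod_(q : dyad) pmf (val q).1 (val q).2 (c q))%:E.
Proof.
pose y i j := if insub (i, j) is Some q then c q else ord0.
have yE (q : dyad) : y (val q).1 (val q).2 = c q by rewrite /y -surjective_pairing valK.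
have -> : [set w | forall q : dyad, Yd q w = c q] =
    [set w | forall i j, i != j -> Y i j w = y i j].
  rewrite (dyad_rectE (fun p v => v = y p.1 p.2)).
  by apply/seteqP; split => w Yc q /=; rewrite Yc yE.
rewrite P_configuration pair_big_dep /= big_sig_cond.
by congr (_%:E); apply: eq_bigr => q _; rewrite yE.
Qed.

Let Yd_measurable (q : dyad) (y : 'I_M.+1) : measurable [set w | Yd q w = y] :=
  Y_measurable _ _ y (valP q).

Lemma measurable_dyad_rect (A : 'I_N * 'I_N -> pred 'I_M.+1) :
  measurable [set w | forall i j, i != j -> A (i, j) (Y i j w)].
Proof.
rewrite (dyad_rectE (fun p y => A p y)).
exact: (@measurable_rect _ _ _ _ (fun q => Yd q) Yd_measurable (fun q => A (val q))).
Qed.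

Lemma prob_dyad_rect (A : 'I_N * 'I_N -> pred 'I_M.+1) :
  P [set w | forall i j, i != j -> A (i, j) (Y i j w)] =
  (\prod_(p | p.1 != p.2) \sum_(y | A p y) pmf p.1 p.2 y)%:E.
Proof.
rewrite (dyad_rectE (fun p y => A p y)) big_sig_cond.
exact: (@prob_rect _ _ _ _ _ _ (fun q => Yd q) (fun q => pmf (val q).1 (val q).2)
  Yd_measurable prob_dyad_atom (fun q => A (val q))).
Qed.

Hypothesis M_gt0 : (0 < M)%N.
Context {i1 i2 j1 j2 : 'I_N}.
Hypothesis tetrad_uniq : uniq [:: i1; i2; j1; j2].

Let tetrad_pred (A11 A12 A21 A22 : pred 'I_M.+1) (p : 'I_N * 'I_N) :=
  if p == (i1, j1) then A11 else if p == (i1, j2) then A12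
  else if p == (i2, j1) then A21 else if p == (i2, j2) then A22 else predT.

Local Notation tetrad_event A11 A12 A21 A22 := [set w |
  [&& A11 (Y i1 j1 w), A12 (Y i1 j2 w), A21 (Y i2 j1 w) & A22 (Y i2 j2 w)]].

Let tetrad_eqF :
  ((i1 == i2) = false) * ((i2 == i1) = false) * ((j1 == j2) = false) * ((j2 == j1) = false) *
  ((i1 == j1) = false) * ((i1 == j2) = false) * ((i2 == j1) = false) * ((i2 == j2) = false) *
  ((j1 == i1) = false) * ((j2 == i1) = false) * ((j1 == i2) = false) * ((j2 == i2) = false).
Proof.
move: tetrad_uniq; rewrite /= !inE !negb_or.
move=> /and4P[/and3P[/negbTE n12 /negbTE n1a /negbTE n1b]].
move=> /andP[/negbTE n2a /negbTE n2b] /negbTE nab _.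
by do !split; rewrite // eq_sym.
Qed.

Lemma tetrad_eventE A11 A12 A21 A22 : tetrad_event A11 A12 A21 A22 =
  [set w | forall i j, i != j -> tetrad_pred A11 A12 A21 A22 (i, j) (Y i j w)].
Proof.
apply/seteqP; split => w /=.
  move=> /and4P[A11w A12w A21w A22w] i j _; rewrite /tetrad_pred.
  by do 4?[case: ifP => [/eqP[-> ->] // | _]].
move=> Aw; apply/and4P; split.
- by have := Aw i1 j1; rewrite /tetrad_pred !xpair_eqE !eqxx ?tetrad_eqF; apply.
- by have := Aw i1 j2; rewrite /tetrad_pred !xpair_eqE !eqxx ?tetrad_eqF; apply.
- by have := Aw i2 j1; rewrite /tetrad_pred !xpair_eqE !eqxx ?tetrad_eqF; apply.
- by have := Aw i2 j2; rewrite /tetrad_pred !xpair_eqE !eqxx ?tetrad_eqF; apply.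
Qed.

Lemma measurable_tetrad A11 A12 A21 A22 : measurable (tetrad_event A11 A12 A21 A22).
Proof. by rewrite tetrad_eventE; apply: measurable_dyad_rect. Qed.

Lemma prob_tetrad A11 A12 A21 A22 :
  P (tetrad_event A11 A12 A21 A22) =
  ((\sum_(y | A11 y) pmf i1 j1 y) * (\sum_(y | A12 y) pmf i1 j2 y) *
   (\sum_(y | A21 y) pmf i2 j1 y) * (\sum_(y | A22 y) pmf i2 j2 y))%:E.
Proof.
rewrite tetrad_eventE prob_dyad_rect.
rewrite (big_supp_seq [:: (i1, j1); (i1, j2); (i2, j1); (i2, j2)]).
- by rewrite !big_cons big_nil /= mulr1 !mulrA /tetrad_pred !xpair_eqE !eqxx ?tetrad_eqF.
- by rewrite /= !inE !xpair_eqE !eqxx ?tetrad_eqF.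
- by move=> p; rewrite !inE => /or4P[] /eqP ->; rewrite unfold_in /= ?tetrad_eqF.
move=> p _; rewrite !inE !negb_or => /and4P[/negbTE p11 /negbTE p12 /negbTE p21 /negbTE p22].
by rewrite /tetrad_pred p11 p12 p21 p22; apply: sum_ologit_pmf.
Qed.

End DyadicOrderedLogit.

Theorem theorem4 (R : realType) (N M k : nat) (hN : (4 <= N)%N) (hM : (1 <= M)%N)
  (X : 'I_N -> 'I_N -> 'rV[R]_k) (beta0 : 'rV[R]_k)
  (gamma : 'I_N -> R) (lambda : 'I_N -> nat -> R)
  (hmono : forall (i : 'I_N) (m : nat), (1 <= m)%N -> (m < M)%N ->
     lambda i m <= lambda i m.+1)
  (d : measure_display) (Omega : measurableType d) (P : probability Omega R)
  (Y : 'I_N -> 'I_N -> Omega -> 'I_M.+1)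
  (hYmeas : forall (i j : 'I_N) (y : 'I_M.+1), i != j ->
     measurable [set w | Y i j w = y])
  (hindep : forall y : 'I_N -> 'I_N -> 'I_M.+1,
     P [set w | forall i j : 'I_N, i != j -> Y i j w = y i j] =
     (\prod_(i < N) \prod_(j < N | i != j)
        ologit_pmf X beta0 gamma lambda i j (y i j))%:E)
  (i1 i2 j1 j2 : 'I_N)
  (hdist : uniq [:: i1; i2; j1; j2])
  (m m' : nat) (hm : (1 <= m <= M)%N) (hm' : (1 <= m' <= M)%N) :
  let Z := fun w : Omega =>
    2^-1 * ((Dind R (Y i1 j1 w) m - Dind R (Y i1 j2 w) m)
            - (Dind R (Y i2 j1 w) m' - Dind R (Y i2 j2 w) m')) in
  let r := (X i1 j1 - X i1 j2) - (X i2 j1 - X i2 j2) in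
  condprob P [set w | Z w = 1] [set w | Z w = 1 \/ Z w = -1]
  = logistic (inner r beta0).
Proof.
move=> Z r; have /andP[_ le_mM] := hm; have /andP[_ le_m'M] := hm'.
pose atleast n := [pred y : 'I_M.+1 | (n <= y)%N].
pose below n := [pred y : 'I_M.+1 | (y < n)%N].
have Z_eq1 : [set w | Z w = 1] = [set w | [&& atleast m (Y i1 j1 w),
    below m (Y i1 j2 w), below m' (Y i2 j1 w) & atleast m' (Y i2 j2 w)]].
  by rewrite predeqE => w; rewrite /Z /Dind /= !ltnNge; apply: half_diff_eq1.
have Z_eqN1 : [set w | Z w = -1] = [set w | [&& below m (Y i1 j1 w),
    atleast m (Y i1 j2 w), atleast m' (Y i2 j1 w) & below m' (Y i2 j2 w)]].
  by rewrite predeqE => w; rewrite /Z /Dind /= !ltnNge; apply: half_diff_eqN1.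
rewrite (_ : [set w | Z w = 1 \/ Z w = -1] = [set w | Z w = 1] `|` [set w | Z w = -1]) //.
rewrite condprob_setU; first last.
- by apply/seteqP; split => // w [/= ->]; lra.
- by rewrite Z_eqN1; apply: measurable_tetrad.
- by rewrite Z_eq1; apply: measurable_tetrad.
rewrite Z_eq1 Z_eqN1 !(prob_tetrad hYmeas hindep hM hdist) /=.
rewrite !sum_ologit_pmf_ge ?sum_ologit_pmf_lt ?leqW // !ologit_survE // -!logisticN.
rewrite logistic_tetrad; congr logistic.
by rewrite /r !innerB /Defs.eta; ring.
Qed.
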